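(* Let $n,m\ge 1$, $p_{ij}\in\mathbb{R}^3$, $N^x_i,N^y_i,N^z_i\in\mathbb{R}^3\setminus\{0\}$, $d_x,d_y>0$, $\epsilon>0$. Let $\mathbb{B}_R=\{r:\|r-r_c\|_\infty\le\delta_R\}$ with $\delta_R\ge0$, $\sqrt3\,\delta_R\le\pi$, $\Phi_c=R(r_c)$, and $\mathbb{B}_t=\{\Delta:\|\Delta-\Delta_c\|_\infty\le\delta_t\}$ with $\delta_t\ge0$. For each $i,j$ and each $a\in\{x,y,z\}$, with $N=N^a_i$ and $w=p_{ij}-\Delta_c$, let $c=(\Phi_c\bar N)^\top w$, let $\beta=\angle(\Phi_c\bar N,w)$ (if $w=0$ set $g_{\max}=g_{\min}=0$), and define $g_{\max},g_{\min}$ by: $g_{\max}=\|w\|$ if $\beta\le\sqrt3\delta_R$, otherwise $g_{\max}=\|w\|\max(\cos(\beta-\sqrt3\delta_R),\cos(\beta+\sqrt3\delta_R))$; $g_{\min}=-\|w\|$ if $\beta\ge\pi-\sqrt3\delta_R$, otherwise $g_{\min}=\|w\|\min(\cos(\beta-\sqrt3\delta_R),\cos(\beta+\sqrt3\delta_R))$. Set $$\delta^a_{ij}=\sqrt3\,\delta_t+\max\bigl(|c-g_{\min}|,\ |c-g_{\max}|\bigr).$$ Define $$\hat Q'(\mathbb{B}_R,\mathbb{B}_t)=\sum_{i=1}^n\sum_{j=1}^m \lfloor |(\bar N^x_i)^\top\Phi_c^\top(p_{ij}-\Delta_c)-\|N^x_i\||<d_x+\epsilon+\delta^x_{ij}\rfloor\cdot\lfloor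 |(\bar N^y_i)^\top\Phi_c^\top(p_{ij}-\Delta_c)-\|N^y_i\||<d_y+\epsilon+\delta^y_{ij}\rfloor\cdot\lfloor |(\bar N^z_i)^\top\Phi_c^\top(p_{ij}-\Delta_c)-\|N^z_i\||<\epsilon+\delta^z_{ij}\rfloor.$$ Then $\hat Q'(\mathbb{B}_R,\mathbb{B}_t)\ge\max_{r\in\mathbb{B}_R,\Delta\in\mathbb{B}_t}Q(R(r),\Delta)$, and if $\delta_R=\delta_t=0$ then $\hat Q'(\mathbb{B}_R,\mathbb{B}_t)=Q(\Phi_c,\Delta_c)$.
   Context: For a nonzero vector $N\in\mathbb{R}^3$, $\bar N:=N/\|N\|$; $\angle(a,b)\in[0,\pi]$ is the angle between nonzero vectors. $\lfloor S\rfloor$ denotes the indicator of the statement $S$. For $r\in\mathbb{R}^3$, $R(r)\in\mathrm{SO}(3)$ is the rotation by angle $\|r\|$ about the axis $r/\|r\|$ ($R(0)=I$). For $\Phi\in\mathrm{SO}(3)$, $\Delta\in\mathbb{R}^3$, $$Q(\Phi,\Delta)=\sum_{i=1}^n\sum_{j=1}^m \lfloor |(\bar N^x_i)^\top\Phi^\top(p_{ij}-\Delta)-\|N^x_i\||<d_x+\epsilon\rfloor\cdot\lfloor |(\bar N^y_i)^\top\Phi^\top(p_{ij}-\Delta)-\|N^y_i\||<d_y+\epsilon\rfloor\cdot\lfloor |(\bar N^z_i)^\top\Phi^\top(p_{ij}-\Delta)-\|N^z_i\||<\epsilon\rfloor .$$ *)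

From Stdlib Require Import Reals Lra.
Open Scope R_scope.

Record vec3 := V3 { vx : R; vy : R; vz : R }.

Definition vadd (a b : vec3) : vec3 := V3 (vx a + vx b) (vy a + vy b) (vz a + vz b).
Definition vsub (a b : vec3) : vec3 := V3 (vx a - vx b) (vy a - vy b) (vz a - vz b).
Definition vscale (k : R) (a : vec3) : vec3 := V3 (k * vx a) (k * vy a) (k * vz a).
Definition dot (a b : vec3) : R := vx a * vx b + vy a * vy b + vz a * vz b.
Definition cross (a b : vec3) : vec3 :=
  V3 (vy a * vz b - vz a * vy b) (vz a * vx b - vx a * vz b) (vx a * vy b - vy a * vx b).
Definition norm (a : vec3) : R := sqrt (dot a a).
Definition norm_inf (a : vec3) : R := Rmax (Rabs (vx a)) (Rmax (Rabs (vy a)) (Rabs (vz a))).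
Definition vzero : vec3 := V3 0 0 0.

Definition unitv (N : vec3) : vec3 := vscale (/ norm N) N.

Definition angle (a b : vec3) : R := acos (dot a b / (norm a * norm b)).

(* Linear maps R^3 -> R^3 represented as functions; rotation R(r) by angle ||r||
   about axis r/||r|| (Rodrigues' formula), with R(0) = I. *)
Definition rot (r : vec3) (v : vec3) : vec3 :=
  let th := norm r in
  if Req_EM_T th 0 then v else
  let k := unitv r in
  vadd (vadd (vscale (cos th) v) (vscale (sin th) (cross k v)))
       (vscale ((1 - cos th) * dot k v) k).

(* We state Phi^T through
   the dot-product identity (Phi^T u)·v, using (Phi N)^T w = N^T Phi^T w.
   We define the term  a^T Phi^T w  as  (Phi a)^T w. *)
Definition dotRT (Phi : vec3 -> vec3) (a w : vec3) : R := dot (Phi a) w.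

Definition ind (x y : R) : nat := if Rlt_dec x y then 1%nat else 0%nat.

Fixpoint sumN (n : nat) (f : nat -> nat) : nat :=
  match n with O => O | S k => (sumN k f + f k)%nat end.

Definition Q (n m : nat) (p : nat -> nat -> vec3) (Nx Ny Nz : nat -> vec3)
  (dx dy eps : R) (Phi : vec3 -> vec3) (Delta : vec3) : nat :=
  sumN n (fun i => sumN m (fun j =>
    (ind (Rabs (dotRT Phi (unitv (Nx i)) (vsub (p i j) Delta) - norm (Nx i))) (dx + eps)
   * ind (Rabs (dotRT Phi (unitv (Ny i)) (vsub (p i j) Delta) - norm (Ny i))) (dy + eps)
   * ind (Rabs (dotRT Phi (unitv (Nz i)) (vsub (p i j) Delta) - norm (Nz i))) eps)%nat)).

(* g_max and g_min for unit direction u = Phi_c Nbar, vector w, rotation radius dR *)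
Definition gmax (u w : vec3) (dR : R) : R :=
  if Req_EM_T (norm w) 0 then 0 else
  let beta := angle u w in
  if Rle_dec beta (sqrt 3 * dR) then norm w
  else norm w * Rmax (cos (beta - sqrt 3 * dR)) (cos (beta + sqrt 3 * dR)).

Definition gmin (u w : vec3) (dR : R) : R :=
  if Req_EM_T (norm w) 0 then 0 else
  let beta := angle u w in
  if Rle_dec (PI - sqrt 3 * dR) beta then - norm w
  else norm w * Rmin (cos (beta - sqrt 3 * dR)) (cos (beta + sqrt 3 * dR)).

Definition delta_bd (N pt rc Dc : vec3) (dR dt : R) : R :=
  let u := rot rc (unitv N) in
  let w := vsub pt Dc in
  let c := dot u w in
  sqrt 3 * dt + Rmax (Rabs (c - gmin u w dR)) (Rabs (c - gmax u w dR)).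

Definition Qhat (n m : nat) (p : nat -> nat -> vec3) (Nx Ny Nz : nat -> vec3)
  (dx dy eps : R) (rc Dc : vec3) (dR dt : R) : nat :=
  let Phic := rot rc in
  sumN n (fun i => sumN m (fun j =>
    (ind (Rabs (dotRT Phic (unitv (Nx i)) (vsub (p i j) Dc) - norm (Nx i)))
         (dx + eps + delta_bd (Nx i) (p i j) rc Dc dR dt)
   * ind (Rabs (dotRT Phic (unitv (Ny i)) (vsub (p i j) Dc) - norm (Ny i)))
         (dy + eps + delta_bd (Ny i) (p i j) rc Dc dR dt)
   * ind (Rabs (dotRT Phic (unitv (Nz i)) (vsub (p i j) Dc) - norm (Nz i)))
         (eps + delta_bd (Nz i) (p i j) rc Dc dR dt))%nat)).

From Coquelicot Require Import Coquelicot.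
From Stdlib Require Import Reals Lra Lia.
Open Scope R_scope.

(* The normal R(r) N̄ stays within angle ‖r − r_c‖ ≤ √3 δ_R of Φ_c N̄. Writing rotations as
   unit quaternions, (R(a)v)·(R(b)v) ≥ 2s² − 1, where the real part s of conj(q_a) q_b equals
   cos A cos B + sin A sin B k for the half-angles A = ‖a‖/2, B = ‖b‖/2 and the cosine k of the
   angle between the axes: the third side of a spherical triangle. Convexity of x ↦ cos √x on
   [0, π²] shows it is at least cos(‖a − b‖/2), the third side of the Euclidean triangle, so
   the rotated normals are at angle at most ‖a − b‖. The spherical triangle inequality then
   confines the angle between R(r) N̄ and w to [β − √3 δ_R, β + √3 δ_R], so each projection
   moves by at most max(|c − g_min|, |c − g_max|), plus √3 δ_t for the translation; hence each
   indicator of Q is dominated by the corresponding one of Q̂'. When δ_R = δ_t = 0 we have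
   g_min = g_max = c. *)

Lemma x_cos_le_sin x : 0 <= x <= PI -> x * cos x <= sin x.
Proof.
  intros Hx.
  destruct (MVT_gen (fun y => sin y - y * cos y) 0 x (fun y => y * sin y)) as [c [Hc Heq]].
  - intros y _. auto_derive; [easy | ring].
  - intros y _. apply derivable_continuous_pt.
    apply derivable_pt_minus; [apply derivable_pt_sin |].
    apply derivable_pt_mult; [apply derivable_pt_id | apply derivable_pt_cos].
  - rewrite Rmin_left, Rmax_right in Hc by lra. rewrite sin_0, cos_0 in Heq.
    assert (0 <= sin c) by (apply sin_ge_0; lra).
    assert (0 <= c * sin c * (x - 0)) by (apply Rmult_le_pos; [apply Rmult_le_pos |]; lra).
    lra.
Qed.

Lemma sin_div_antitone s t : 0 < s -> s <= t -> t <= PI -> sin t / t <= sin s / s.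
Proof.
  intros Hs Hst Ht.
  destruct (MVT_gen (fun y => sin y / y) s t (fun y => (y * cos y - sin y) / (y * y)))
    as [c [Hc Heq]].
  - intros y Hy. rewrite Rmin_left, Rmax_right in Hy by lra.
    auto_derive; [lra | field; lra].
  - intros y Hy. rewrite Rmin_left, Rmax_right in Hy by lra.
    apply derivable_continuous_pt, derivable_pt_div;
      [apply derivable_pt_sin | apply derivable_pt_id | unfold id; lra].
  - rewrite Rmin_left, Rmax_right in Hc by lra.
    assert (Hneg : (c * cos c - sin c) / (c * c) <= 0).
    { pose proof (x_cos_le_sin c ltac:(lra)).
      unfold Rdiv. apply Rmult_le_0_r; [lra |].
      left. apply Rinv_0_lt_compat. nra. }
    assert (0 <= t - s) by lra.
    assert ((c * cos c - sin c) / (c * c) * (t - s) <= 0) by nra.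
    lra.
Qed.

Definition sinc (y : R) : R := if Req_EM_T y 0 then 1 else sin y / y.

Lemma sinc_antitone a b : 0 <= a -> a <= b -> b <= PI -> sinc b <= sinc a.
Proof.
  intros Ha Hab Hb. unfold sinc.
  destruct (Req_EM_T b 0), (Req_EM_T a 0); try lra.
  - assert (sin b < b) by (apply sin_lt_x; lra).
    apply Rmult_le_reg_r with b; [lra |].
    unfold Rdiv. rewrite Rmult_assoc, Rinv_l; lra.
  - apply sin_div_antitone; lra.
Qed.

Definition cos_sqrt (x : R) : R := cos (sqrt x).

Lemma cos_sqrt_MVT x y : 0 <= x <= y ->
  exists c, x <= c <= y /\ cos_sqrt y - cos_sqrt x = - sinc (sqrt c) / 2 * (y - x).
Proof.
  intros Hxy.
  destruct (MVT_gen cos_sqrt x y (fun c => - sinc (sqrt c) / 2)) as [c [Hc Heq]].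
  - intros z Hz. rewrite Rmin_left, Rmax_right in Hz by lra.
    assert (0 < sqrt z) by (apply sqrt_lt_R0; lra).
    unfold cos_sqrt, sinc. destruct (Req_EM_T (sqrt z) 0); [lra |].
    auto_derive; [lra | field; lra].
  - intros z Hz. rewrite Rmin_left, Rmax_right in Hz by lra.
    apply (continuity_pt_comp sqrt cos);
      [apply continuity_pt_sqrt; lra | apply derivable_continuous_pt, derivable_pt_cos].
  - rewrite Rmin_left, Rmax_right in Hc by lra. now exists c.
Qed.

Lemma sqrt_le_PI x : x <= PI * PI -> sqrt x <= PI.
Proof.
  intros Hx. rewrite <- (sqrt_square PI) by (pose proof PI_RGT_0; lra).
  now apply sqrt_le_1_alt.
Qed.

Lemma cos_sqrt_convex x0 x x1 : 0 <= x0 -> x0 <= x -> x <= x1 -> x1 <= PI * PI ->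
  (x1 - x0) * cos_sqrt x <= (x1 - x) * cos_sqrt x0 + (x - x0) * cos_sqrt x1.
Proof.
  intros H0 H1 H2 H3.
  destruct (cos_sqrt_MVT x0 x ltac:(lra)) as [c1 [Hc1 E1]].
  destruct (cos_sqrt_MVT x x1 ltac:(lra)) as [c2 [Hc2 E2]].
  assert (Hs : sinc (sqrt c2) <= sinc (sqrt c1)).
  { apply sinc_antitone; [apply sqrt_pos | apply sqrt_le_1_alt; lra | apply sqrt_le_PI; lra]. }
  assert ((x1 - x) * (x - x0) * sinc (sqrt c2) <= (x1 - x) * (x - x0) * sinc (sqrt c1))
    by (apply Rmult_le_compat_l; nra).
  nra.
Qed.

Lemma cos_sqrt_antitone x y : 0 <= x -> x <= y -> y <= PI * PI -> cos_sqrt y <= cos_sqrt x.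
Proof.
  intros Hx Hxy Hy. unfold cos_sqrt.
  apply cos_decr_1; try apply sqrt_pos; try apply sqrt_le_PI; try lra.
  now apply sqrt_le_1_alt.
Qed.

(* cos_sqrt is convex only on [0, PI^2]; beyond, compare with the chord ending at its
   minimum value -1. *)
Lemma cos_sqrt_chord_beyond x0 x x1 : 0 <= x0 -> x0 <= x -> x <= PI * PI -> PI * PI <= x1 ->
  (x1 - x0) * cos_sqrt x <= (x1 - x) * cos_sqrt x0 - (x - x0).
Proof.
  intros H0 H1 H2 H3.
  assert (Hm : cos_sqrt (PI * PI) = -1).
  { unfold cos_sqrt. rewrite sqrt_square by (pose proof PI_RGT_0; lra). apply cos_PI. }
  assert (Hc := cos_sqrt_convex x0 x (PI * PI) H0 H1 H2 ltac:(lra)).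
  assert (Ha := cos_sqrt_antitone x0 x H0 H1 H2).
  assert (Hb : -1 <= cos_sqrt x0) by apply COS_bound.
  rewrite Hm in Hc. nra.
Qed.

Lemma cos_le_spherical_law a b k e : 0 <= a -> 0 <= b -> -1 <= k <= 1 -> 0 <= e <= PI ->
  e * e = a * a + b * b - 2 * a * b * k ->
  cos e <= cos a * cos b + sin a * sin b * k.
Proof.
  intros Ha Hb Hk He Ee.
  assert (Hab : 0 <= a * b) by (apply Rmult_le_pos; lra).
  assert (Hx0 : cos_sqrt ((a - b) * (a - b)) = cos (a - b)).
  { unfold cos_sqrt. rewrite <- Rsqr_def, sqrt_Rsqr_abs.
    destruct (Rle_dec b a); [rewrite Rabs_right by lra | rewrite Rabs_left, cos_neg by lra];
      reflexivity. }
  assert (Hx : cos_sqrt (e * e) = cos e) by (unfold cos_sqrt; now rewrite sqrt_square).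
  assert (L0 : (a - b) * (a - b) <= e * e)
    by (rewrite Ee; assert (0 <= a * b * (1 - k)) by (apply Rmult_le_pos; lra); nra).
  assert (L1 : e * e <= (a + b) * (a + b))
    by (rewrite Ee; assert (0 <= a * b * (1 + k)) by (apply Rmult_le_pos; lra); nra).
  assert (Chord : ((a + b) * (a + b) - (a - b) * (a - b)) * cos e <=
          ((a + b) * (a + b) - e * e) * cos (a - b) + (e * e - (a - b) * (a - b)) * cos (a + b)).
  { rewrite <- Hx, <- Hx0.
    destruct (Rle_dec ((a + b) * (a + b)) (PI * PI)).
    - replace (cos (a + b)) with (cos_sqrt ((a + b) * (a + b)))
        by (unfold cos_sqrt; now rewrite sqrt_square by lra).
      apply cos_sqrt_convex; try lra. apply Rle_0_sqr.
    - assert (-1 <= cos (a + b)) by apply COS_bound.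
      assert (e * e <= PI * PI) by (apply Rmult_le_compat; lra).
      assert (C := cos_sqrt_chord_beyond ((a - b) * (a - b)) (e * e) ((a + b) * (a + b))
        (Rle_0_sqr _) L0 ltac:(lra) ltac:(lra)).
      nra. }
  destruct (Req_dec (a * b) 0) as [Z | Z].
  - assert (Hs : sin a * sin b = 0).
    { destruct (Rmult_integral _ _ Z) as [-> | ->]; rewrite sin_0; ring. }
    replace (e * e) with ((a - b) * (a - b)) in Hx by nra.
    rewrite <- Hx, Hx0, cos_minus, Hs. nra.
  - replace ((a + b) * (a + b) - (a - b) * (a - b)) with (4 * (a * b)) in Chord by ring.
    rewrite Ee, cos_minus, cos_plus in Chord.
    apply Rmult_le_reg_l with (4 * (a * b)); [lra |]. nra.
Qed.

Lemma dot_self_ge0 a : 0 <= dot a a.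
Proof. destruct a; unfold dot; simpl; nra. Qed.

Lemma norm_ge0 a : 0 <= norm a.
Proof. apply sqrt_pos. Qed.

Lemma dot_vzero_l w : dot vzero w = 0.
Proof. unfold dot, vzero; simpl; ring. Qed.

Lemma norm_vzero : norm vzero = 0.
Proof. unfold norm. rewrite dot_vzero_l. apply sqrt_0. Qed.

Lemma norm_mul_self a : norm a * norm a = dot a a.
Proof. apply sqrt_sqrt, dot_self_ge0. Qed.

Lemma norm_eq0 a : norm a = 0 -> a = vzero.
Proof.
  intros H. apply sqrt_eq_0 in H; [| apply dot_self_ge0].
  destruct a as [x y z]; unfold dot in H; simpl in H; unfold vzero. f_equal; nra.
Qed.

Lemma dot_comm a b : dot a b = dot b a.
Proof. destruct a, b; unfold dot; simpl; ring. Qed.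

Lemma norm_unit u : dot u u = 1 -> norm u = 1.
Proof. intros H. unfold norm. rewrite H. apply sqrt_1. Qed.

Lemma dot_abs_le a b : Rabs (dot a b) <= norm a * norm b.
Proof.
  unfold norm. rewrite <- sqrt_mult by apply dot_self_ge0.
  rewrite <- sqrt_Rsqr_abs. apply sqrt_le_1_alt. unfold Rsqr.
  destruct a as [a1 a2 a3], b as [b1 b2 b3]; unfold dot; simpl.
  (* Lagrange's identity *)
  assert (E : (a1*a1+a2*a2+a3*a3)*(b1*b1+b2*b2+b3*b3) - (a1*b1+a2*b2+a3*b3)*(a1*b1+a2*b2+a3*b3)
    = (a1*b2-a2*b1)^2 + (a1*b3-a3*b1)^2 + (a2*b3-a3*b2)^2) by ring.
  pose proof (pow2_ge_0 (a1*b2-a2*b1)); pose proof (pow2_ge_0 (a1*b3-a3*b1));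
    pose proof (pow2_ge_0 (a2*b3-a3*b2)).
  lra.
Qed.

Lemma unit_dot_bounds u w : dot u u = 1 -> dot w w = 1 -> -1 <= dot u w <= 1.
Proof.
  intros Hu Hw. pose proof (dot_abs_le u w) as H.
  rewrite !norm_unit in H by assumption. apply Rabs_le_between in H. lra.
Qed.

Lemma dot_unitv_r u w : dot u (unitv w) = dot u w / norm w.
Proof. destruct u, w; unfold unitv, vscale, dot, Rdiv; simpl. ring. Qed.

Lemma dot_unitv_self N : N <> vzero -> dot (unitv N) (unitv N) = 1.
Proof.
  intros HN. assert (Hn : norm N <> 0) by (intro E; apply HN, norm_eq0, E).
  rewrite dot_unitv_r, dot_comm, dot_unitv_r, <- norm_mul_self. field. exact Hn.
Qed.

Lemma dot_eq_norm_unitv a b : dot a b = norm a * norm b * dot (unitv a) (unitv b).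
Proof.
  destruct (Req_dec (norm a) 0) as [Ea | Ea].
  { rewrite Ea. apply norm_eq0 in Ea. subst. unfold dot, vzero; simpl; ring. }
  destruct (Req_dec (norm b) 0) as [Eb | Eb].
  { rewrite Eb. apply norm_eq0 in Eb. subst. unfold dot, vzero; simpl; ring. }
  rewrite dot_unitv_r, (dot_comm (unitv a)), dot_unitv_r, (dot_comm b).
  field. split; assumption.
Qed.

Lemma dot_unitv_bounds a b : -1 <= dot (unitv a) (unitv b) <= 1.
Proof.
  destruct (Req_dec (norm a) 0) as [Ea | Ea].
  { apply norm_eq0 in Ea. subst. unfold unitv, vscale, dot, vzero; simpl. lra. }
  destruct (Req_dec (norm b) 0) as [Eb | Eb].
  { apply norm_eq0 in Eb. subst. unfold unitv, vscale, dot, vzero; simpl. lra. }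
  apply unit_dot_bounds; apply dot_unitv_self; intros ->;
    [apply Ea | apply Eb]; apply norm_vzero.
Qed.

Lemma norm_le_sqrt3_norm_inf d M : norm_inf d <= M -> norm d <= sqrt 3 * M.
Proof.
  intros H. unfold norm_inf in H. destruct d as [x y z]; simpl in H.
  pose proof (Rmax_l (Rabs x) (Rmax (Rabs y) (Rabs z))).
  pose proof (Rmax_r (Rabs x) (Rmax (Rabs y) (Rabs z))).
  pose proof (Rmax_l (Rabs y) (Rabs z)). pose proof (Rmax_r (Rabs y) (Rabs z)).
  assert (Hx : Rabs x <= M) by lra. assert (Hy : Rabs y <= M) by lra.
  assert (Hz : Rabs z <= M) by lra.
  assert (HM : 0 <= M) by (pose proof (Rabs_pos x); lra).
  apply Rabs_le_between in Hx, Hy, Hz.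
  unfold norm, dot; simpl.
  rewrite <- (sqrt_square M), <- sqrt_mult by nra. apply sqrt_le_1_alt.
  assert (x * x <= M * M) by nra. assert (y * y <= M * M) by nra.
  assert (z * z <= M * M) by nra. lra.
Qed.

(* Cosine form of the triangle inequality on the unit sphere. *)
Lemma unit_dot_triangle x y z : dot x x = 1 -> dot y y = 1 -> dot z z = 1 ->
  Rabs (dot x z - dot x y * dot y z) <=
  sqrt (1 - dot x y * dot x y) * sqrt (1 - dot y z * dot y z).
Proof.
  intros Hx Hy Hz.
  set (a := vsub x (vscale (dot x y) y)). set (b := vsub z (vscale (dot y z) y)).
  assert (Eab : dot a b = dot x z - dot x y * dot y z).
  { transitivity (dot x z - 2 * (dot x y * dot y z) + dot x y * dot y z * dot y y).
    - unfold a, b. destruct x, y, z; unfold dot, vsub, vscale; simpl; ring.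
    - rewrite Hy. ring. }
  assert (Eaa : dot a a = 1 - dot x y * dot x y).
  { transitivity (dot x x - 2 * (dot x y * dot x y) + dot x y * dot x y * dot y y).
    - unfold a. destruct x, y; unfold dot, vsub, vscale; simpl; ring.
    - rewrite Hx, Hy. ring. }
  assert (Ebb : dot b b = 1 - dot y z * dot y z).
  { transitivity (dot z z - 2 * (dot y z * dot y z) + dot y z * dot y z * dot y y).
    - unfold b. destruct z, y; unfold dot, vsub, vscale; simpl; ring.
    - rewrite Hz, Hy. ring. }
  rewrite <- Eab, <- Eaa, <- Ebb. apply dot_abs_le.
Qed.

(* The rotation v |-> q v q^-1 by the quaternion q = (s, P). *)
Definition quat_rot (s : R) (P v : vec3) : vec3 :=
  vadd (vadd (vscale (s * s - dot P P) v) (vscale (2 * s) (cross P v)))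
       (vscale (2 * dot P v) P).

(* (s, W) is the quaternion conj(p0, P) * (q0, Q). *)
Lemma quat_rot_dot p0 P q0 Q v :
  let s := p0 * q0 + dot P Q in
  let W := vsub (vsub (vscale p0 Q) (vscale q0 P)) (cross P Q) in
  dot (quat_rot p0 P v) (quat_rot q0 Q v) = (s * s - dot W W) * dot v v + 2 * (dot W v * dot W v).
Proof. destruct P, Q, v; unfold quat_rot, dot, vadd, vsub, vscale, cross; simpl; ring. Qed.

Lemma quat_norm_mul p0 P q0 Q :
  let s := p0 * q0 + dot P Q in
  let W := vsub (vsub (vscale p0 Q) (vscale q0 P)) (cross P Q) in
  s * s + dot W W = (p0 * p0 + dot P P) * (q0 * q0 + dot Q Q).
Proof. destruct P, Q; unfold dot, vsub, vscale, cross; simpl; ring. Qed.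

Definition quat_re (r : vec3) : R := cos (norm r / 2).
Definition quat_im (r : vec3) : vec3 := vscale (sin (norm r / 2)) (unitv r).

Lemma quat_unit r : quat_re r * quat_re r + dot (quat_im r) (quat_im r) = 1.
Proof.
  unfold quat_re, quat_im.
  assert (E : dot (vscale (sin (norm r / 2)) (unitv r)) (vscale (sin (norm r / 2)) (unitv r))
              = sin (norm r / 2) * sin (norm r / 2) * dot (unitv r) (unitv r))
    by (destruct (unitv r); unfold dot, vscale; simpl; ring).
  pose proof (sin2_cos2 (norm r / 2)) as H. unfold Rsqr in H.
  destruct (Req_dec (norm r) 0) as [Z | Z].
  - rewrite Z in *. replace (0 / 2) with 0 in * by field. rewrite sin_0 in *. lra.
  - rewrite E, dot_unitv_self by (intros ->; apply Z, norm_vzero). lra.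
Qed.

Lemma rot_eq_quat_rot r v : rot r v = quat_rot (quat_re r) (quat_im r) v.
Proof.
  unfold rot, quat_re, quat_im.
  destruct (Req_EM_T (norm r) 0) as [Z | Z].
  - rewrite Z. replace (0 / 2) with 0 by field. rewrite sin_0, cos_0.
    destruct v, (unitv r); unfold quat_rot, dot, vadd, vscale, cross; simpl; f_equal; ring.
  - assert (Hk := dot_unitv_self r ltac:(intros ->; apply Z, norm_vzero)).
    set (t := norm r) in *.
    replace t with (2 * (t / 2)) at 1 2 3 by field.
    rewrite cos_2a, sin_2a.
    pose proof (sin2_cos2 (t / 2)) as HS. unfold Rsqr in HS.
    set (C := cos (t / 2)) in *. set (S := sin (t / 2)) in *.
    set (k := unitv r) in *.
    assert (E : dot (vscale S k) (vscale S k) = S * S)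
      by (rewrite <- (Rmult_1_r (S * S)), <- Hk; destruct k; unfold dot, vscale; simpl; ring).
    unfold quat_rot. rewrite E. rewrite <- HS at 1.
    destruct v as [v1 v2 v3], k as [k1 k2 k3]; unfold dot, vadd, vscale, cross; simpl.
    f_equal; ring.
Qed.

Lemma rot_dot_self r v : dot (rot r v) (rot r v) = dot v v.
Proof.
  rewrite rot_eq_quat_rot, quat_rot_dot. cbv zeta.
  assert (HW : vsub (vsub (vscale (quat_re r) (quat_im r)) (vscale (quat_re r) (quat_im r)))
                    (cross (quat_im r) (quat_im r)) = vzero)
    by (destruct (quat_im r); unfold vsub, vscale, cross, vzero; simpl; f_equal; ring).
  rewrite HW, quat_unit, !dot_vzero_l. ring.
Qed.

(* The dot product is at least 2 s^2 - 1, and s >= cos (|a - b| / 2) by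
   cos_le_spherical_law. *)
Lemma cos_norm_sub_le_dot_rot a b v : dot v v = 1 -> norm (vsub a b) <= PI ->
  cos (norm (vsub a b)) <= dot (rot a v) (rot b v).
Proof.
  intros Hv Hab. rewrite !rot_eq_quat_rot, quat_rot_dot. cbv zeta.
  pose proof (quat_norm_mul (quat_re a) (quat_im a) (quat_re b) (quat_im b)) as QN.
  cbv zeta in QN. rewrite !quat_unit in QN.
  set (s := quat_re a * quat_re b + dot (quat_im a) (quat_im b)) in *.
  set (W := vsub _ (cross (quat_im a) (quat_im b))) in *.
  rewrite Hv.
  set (k := dot (unitv a) (unitv b)).
  assert (Hs : s = cos (norm a / 2) * cos (norm b / 2) + sin (norm a / 2) * sin (norm b / 2) * k)
    by (unfold s, k, quat_re, quat_im; destruct (unitv a), (unitv b); unfold dot, vscale;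
        simpl; ring).
  set (e := norm (vsub a b) / 2).
  assert (He : e * e = norm a / 2 * (norm a / 2) + norm b / 2 * (norm b / 2)
                       - 2 * (norm a / 2) * (norm b / 2) * k).
  { assert (E : norm (vsub a b) * norm (vsub a b) = norm a * norm a + norm b * norm b - 2 * dot a b)
      by (rewrite !norm_mul_self; destruct a, b; unfold dot, vsub; simpl; ring).
    rewrite dot_eq_norm_unitv in E. fold k in E. unfold e. nra. }
  pose proof (norm_ge0 (vsub a b)). pose proof (norm_ge0 a). pose proof (norm_ge0 b).
  pose proof PI_RGT_0. pose proof (pow2_ge_0 (dot W v)).
  assert (T := cos_le_spherical_law (norm a / 2) (norm b / 2) k e ltac:(lra) ltac:(lra)
    (dot_unitv_bounds a b) ltac:(unfold e; lra) He).
  rewrite <- Hs in T.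
  assert (0 <= cos e) by (apply cos_ge_0; unfold e; lra).
  replace (norm (vsub a b)) with (2 * e) by (unfold e; field).
  rewrite cos_2a_cos. nra.
Qed.

Lemma angle_unit_l u w : dot u u = 1 -> angle u w = acos (dot u (unitv w)).
Proof. intros Hu. unfold angle. now rewrite norm_unit, Rmult_1_l, dot_unitv_r. Qed.

Lemma dot_unitv_r_scale u w : w <> vzero -> dot u w = norm w * dot u (unitv w).
Proof.
  intros Hw. assert (norm w <> 0) by (intro E; apply Hw, norm_eq0, E).
  rewrite dot_unitv_r. field. assumption.
Qed.

Lemma unit_dot_between_cos u uc w : dot u u = 1 -> dot uc uc = 1 -> dot w w = 1 ->
  cos (acos (dot uc w) + acos (dot u uc)) <= dot u w <=
  cos (acos (dot uc w) - acos (dot u uc)).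
Proof.
  intros Hu Huc Hw.
  pose proof (unit_dot_bounds _ _ Huc Hw). pose proof (unit_dot_bounds _ _ Hu Huc).
  pose proof (unit_dot_triangle u uc w Hu Huc Hw) as T. apply Rabs_le_between in T.
  rewrite cos_plus, cos_minus, !cos_acos, !sin_acos by lra. unfold Rsqr. nra.
Qed.

Lemma gmin_le_dot_le_gmax u uc w dR : dot u u = 1 -> dot uc uc = 1 ->
  0 <= sqrt 3 * dR <= PI -> cos (sqrt 3 * dR) <= dot u uc ->
  gmin uc w dR <= dot u w <= gmax uc w dR.
Proof.
  intros Hu Huc Hth Hc. unfold gmin, gmax. cbv zeta.
  destruct (Req_EM_T (norm w) 0) as [Z | Z].
  { apply norm_eq0 in Z. subst. rewrite dot_comm, dot_vzero_l. lra. }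
  assert (Hw : w <> vzero) by (intros ->; apply Z, norm_vzero).
  rewrite angle_unit_l, (dot_unitv_r_scale u w Hw) by assumption.
  pose proof (dot_unitv_self w Hw) as Hwh.
  destruct (unit_dot_between_cos u uc (unitv w) Hu Huc Hwh) as [Lo Up].
  pose proof (unit_dot_bounds _ _ Hu Hwh).
  pose proof (norm_ge0 w).
  pose proof (acos_bound (dot uc (unitv w))). pose proof (acos_bound (dot u uc)).
  assert (Hgam : acos (dot u uc) <= sqrt 3 * dR).
  { apply cos_decr_0; try lra. rewrite cos_acos; [lra |]. now apply unit_dot_bounds. }
  set (th := sqrt 3 * dR) in *.
  set (beta := acos (dot uc (unitv w))) in *. set (gam := acos (dot u uc)) in *.
  split.
  - destruct (Rle_dec (PI - th) beta); [nra |].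
    assert (cos (beta + th) <= cos (beta + gam)) by (apply cos_decr_1; lra).
    pose proof (Rmin_r (cos (beta - th)) (cos (beta + th))).
    apply Rmult_le_compat_l; lra.
  - destruct (Rle_dec beta th); [nra |].
    assert (cos (beta - gam) <= cos (beta - th)) by (apply cos_decr_1; lra).
    pose proof (Rmax_l (cos (beta - th)) (cos (beta + th))).
    apply Rmult_le_compat_l; lra.
Qed.

Lemma gmin_gmax_0 u w : dot u u = 1 -> gmin u w 0 = dot u w /\ gmax u w 0 = dot u w.
Proof.
  intros Hu. unfold gmin, gmax. cbv zeta.
  rewrite Rmult_0_r, !Rminus_0_r, Rplus_0_r, Rmin_left, Rmax_left by lra.
  destruct (Req_EM_T (norm w) 0) as [Z | Z].
  { apply norm_eq0 in Z. subst. rewrite dot_comm, dot_vzero_l. lra. }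
  assert (Hw : w <> vzero) by (intros ->; apply Z, norm_vzero).
  rewrite angle_unit_l, (dot_unitv_r_scale u w Hw) by assumption.
  set (c := dot u (unitv w)).
  assert (Cb : cos (acos c) = c) by (apply cos_acos, unit_dot_bounds, dot_unitv_self; assumption).
  pose proof (acos_bound c).
  split.
  - destruct (Rle_dec PI (acos c)) as [E | _]; [| now rewrite Cb].
    rewrite <- Cb, (Rle_antisym (acos c) PI), cos_PI by lra. ring.
  - destruct (Rle_dec (acos c) 0) as [E | _]; [| now rewrite Cb].
    rewrite <- Cb, (Rle_antisym (acos c) 0), cos_0 by lra. ring.
Qed.

Lemma Rabs_sub_le_Rmax x c lo hi : lo <= x <= hi ->
  Rabs (x - c) <= Rmax (Rabs (c - lo)) (Rabs (c - hi)).
Proof.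
  intros Hx. unfold Rmax, Rabs.
  repeat destruct Rcase_abs; destruct Rle_dec; lra.
Qed.

Lemma dotRT_rot_sub_le_delta_bd N pt r rc Delta Dc dR dt : N <> vzero ->
  0 <= dR -> sqrt 3 * dR <= PI -> 0 <= dt ->
  norm_inf (vsub r rc) <= dR -> norm_inf (vsub Delta Dc) <= dt ->
  Rabs (dotRT (rot r) (unitv N) (vsub pt Delta) - dotRT (rot rc) (unitv N) (vsub pt Dc))
  <= delta_bd N pt rc Dc dR dt.
Proof.
  intros HN HdR HPI Hdt Hr HD. unfold dotRT, delta_bd. cbv zeta.
  pose proof (dot_unitv_self N HN) as Hv.
  pose proof (rot_dot_self r (unitv N)) as Hu. pose proof (rot_dot_self rc (unitv N)) as Huc.
  rewrite Hv in Hu, Huc.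
  set (u := rot r (unitv N)) in *. set (uc := rot rc (unitv N)) in *.
  assert (Hth : 0 <= sqrt 3 * dR) by (apply Rmult_le_pos; [apply sqrt_pos | lra]).
  pose proof (norm_le_sqrt3_norm_inf _ _ Hr) as Hnr.
  assert (Hcos : cos (sqrt 3 * dR) <= dot u uc).
  { eapply Rle_trans; [| apply cos_norm_sub_le_dot_rot; [exact Hv | lra]].
    apply cos_decr_1; try apply norm_ge0; lra. }
  pose proof (gmin_le_dot_le_gmax u uc (vsub pt Dc) dR Hu Huc (conj Hth HPI) Hcos) as G.
  assert (Ht : Rabs (dot u (vsub Delta Dc)) <= sqrt 3 * dt).
  { eapply Rle_trans; [apply dot_abs_le |]. rewrite (norm_unit u Hu), Rmult_1_l.
    now apply norm_le_sqrt3_norm_inf. }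
  pose proof (Rabs_sub_le_Rmax _ (dot uc (vsub pt Dc)) _ _ G) as M.
  replace (dot u (vsub pt Delta) - dot uc (vsub pt Dc))
    with ((dot u (vsub pt Dc) - dot uc (vsub pt Dc)) - dot u (vsub Delta Dc))
    by (destruct u, uc, pt, Delta, Dc; unfold dot, vsub; simpl; ring).
  eapply Rle_trans; [apply Rabs_triang |]. rewrite Rabs_Ropp. lra.
Qed.

Lemma delta_bd_0 N pt rc Dc : N <> vzero -> delta_bd N pt rc Dc 0 0 = 0.
Proof.
  intros HN. unfold delta_bd. cbv zeta.
  pose proof (rot_dot_self rc (unitv N)) as Hu. rewrite dot_unitv_self in Hu by exact HN.
  destruct (gmin_gmax_0 _ (vsub pt Dc) Hu) as [-> ->].
  rewrite Rmult_0_r, Rplus_0_l, Rminus_diag, Rabs_R0, Rmax_left; lra.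
Qed.

Lemma sumN_le n f g : (forall i, (i < n)%nat -> (f i <= g i)%nat) -> (sumN n f <= sumN n g)%nat.
Proof.
  induction n as [| n IH]; intros H; simpl; [lia |].
  specialize (H n ltac:(lia)) as Hn. specialize (IH ltac:(intros; apply H; lia)). lia.
Qed.

Lemma sumN_ext n f g : (forall i, (i < n)%nat -> f i = g i) -> sumN n f = sumN n g.
Proof.
  induction n as [| n IH]; intros H; simpl; [reflexivity |].
  rewrite H by lia. rewrite IH by (intros; apply H; lia). reflexivity.
Qed.

Lemma ind_le x a y b : (x < a -> y < b) -> (ind x a <= ind y b)%nat.
Proof. intros H. unfold ind. destruct (Rlt_dec x a), (Rlt_dec y b); auto; exfalso; auto. Qed.

Lemma Rabs_sub_lt_shift x y c a d : Rabs (x - y) <= d -> Rabs (x - c) < a -> Rabs (y - c) < a + d.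
Proof.
  intros H1 H2. replace (y - c) with ((x - c) - (x - y)) by ring.
  eapply Rle_lt_trans; [apply Rabs_triang |]. rewrite Rabs_Ropp. lra.
Qed.

Theorem mainTheorem3 (n m : nat) (p : nat -> nat -> vec3) (Nx Ny Nz : nat -> vec3)
  (dx dy eps : R) (rc Dc : vec3) (dR dt : R) :
  (1 <= n)%nat -> (1 <= m)%nat ->
  (forall i, (i < n)%nat -> Nx i <> vzero /\ Ny i <> vzero /\ Nz i <> vzero) ->
  0 < dx -> 0 < dy -> 0 < eps ->
  0 <= dR -> sqrt 3 * dR <= PI -> 0 <= dt ->
  (forall r Delta, norm_inf (vsub r rc) <= dR -> norm_inf (vsub Delta Dc) <= dt ->
     (Q n m p Nx Ny Nz dx dy eps (rot r) Delta
       <= Qhat n m p Nx Ny Nz dx dy eps rc Dc dR dt)%nat)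
  /\ (dR = 0 -> dt = 0 ->
       Qhat n m p Nx Ny Nz dx dy eps rc Dc dR dt = Q n m p Nx Ny Nz dx dy eps (rot rc) Dc).
Proof.
  intros _ _ HN _ _ _ HdR HPI Hdt. split.
  - intros r Delta Hr HD. unfold Q, Qhat. cbv zeta.
    apply sumN_le; intros i Hi; apply sumN_le; intros j _.
    destruct (HN i Hi) as (Hx & Hy & Hz).
    apply Nat.mul_le_mono; [apply Nat.mul_le_mono |];
      apply ind_le, Rabs_sub_lt_shift, dotRT_rot_sub_le_delta_bd; assumption.
  - intros -> ->. unfold Q, Qhat. cbv zeta.
    apply sumN_ext; intros i Hi; apply sumN_ext; intros j _.
    destruct (HN i Hi) as (Hx & Hy & Hz).
    rewrite !delta_bd_0, !Rplus_0_r by assumption. reflexivity.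
Qed.
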